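(* Let $n\ge2$, $1\le k\le n-1$. Let $Y$ have a continuous distribution function $G$ on $[l_G,r_G]$, and let $g$ be positive, continuous and strictly decreasing on $(l_G,r_G)$ with $\lim_{y\to r_G^-}g(y)=0$; put $\tau=\lim_{y\to l_G^+}[g(y)]^{-1/(k+1)}$. Then \[ E[g(Y(n))\mid Y(n-k)=s,\ Y(n+1)=t]=[g(t)]^{k/(k+1)}[g(s)]^{1/(k+1)}\qquad (l_G<s<t<r_G) \] holds if and only if $G(y)=1-\exp\{-c([g(y)]^{-1/(k+1)}-\tau)\}$ for $l_G<y<r_G$, for some constant $c>0$.
   Context: $Y_1,Y_2,\dots$ are i.i.d. copies of $Y$ with distribution function $G$; $l_G=\inf\{y:G(y)>0\}$, $r_G=\sup\{y:G(y)<1\}$. Upper record times $L(1)=1$, $L(m)=\min\{j>L(m-1):Y_j>Y_{L(m-1)}\}$, record values $Y(m)=Y_{L(m)}$. With $R(y)=-\ln(1-G(y))$, conditional expectations given $Y(n-k)=s$, $Y(n+1)=t$ use the conditional density of $Y(n)$: $k[\frac{R(x)-R(s)}{R(t)-R(s)}]^{k-1}\frac{R'(x)}{R(t)-R(s)}$, $s<x<t$. *)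

From Stdlib Require Import Reals Lra.
Open Scope R_scope.

Definition is_cont_cdf (G : R -> R) : Prop :=
  (forall x y, x <= y -> G x <= G y) /\
  continuity G /\
  (forall eps, 0 < eps -> exists M, forall x, x <= M -> G x < eps) /\
  (forall eps, 0 < eps -> exists M, forall x, M <= x -> 1 - G x < eps).

(* l_G < y < r_G ; for a continuous distribution function G this is
   exactly 0 < G y < 1 (l_G = inf{G>0}, r_G = sup{G<1}). *)
Definition in_supp (G : R -> R) (y : R) : Prop := 0 < G y /\ G y < 1.

Definition Rhaz (G : R -> R) (y : R) : R := - ln (1 - G y).

(* Conditional distribution function of Y(n) given Y(n-k)=s, Y(n+1)=t on [s,t]:
   the integral from s to x of the conditional density
   k [(R(u)-R(s))/(R(t)-R(s))]^(k-1) R'(u)/(R(t)-R(s)). *)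
Definition cond_cdf (G : R -> R) (k : nat) (s t x : R) : R :=
  ((Rhaz G x - Rhaz G s) / (Rhaz G t - Rhaz G s)) ^ k.

Fixpoint RS_sum (f F : R -> R) (x xi : nat -> R) (m : nat) : R :=
  match m with
  | O => 0
  | S m' => RS_sum f F x xi m' + f (xi m') * (F (x (S m')) - F (x m'))
  end.

Definition tagged_partition (a b : R) (m : nat) (x xi : nat -> R) : Prop :=
  x O = a /\ x m = b /\ forall i, (i < m)%nat -> x i <= xi i <= x (S i).

Definition RS_integral_is (f F : R -> R) (a b I : R) : Prop :=
  forall eps, 0 < eps -> exists delta, 0 < delta /\
    forall (m : nat) (x xi : nat -> R),
      tagged_partition a b m x xi ->
      (forall i, (i < m)%nat -> x (S i) - x i < delta) ->
      Rabs (RS_sum f F x xi m - I) < eps.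

(* E[g(Y(n)) | Y(n-k)=s, Y(n+1)=t] = v, i.e. the Stieltjes integral of g
   against the conditional distribution function on [s,t] equals v. *)
Definition cond_exp_record_is (G : R -> R) (k : nat) (g : R -> R) (s t v : R) : Prop :=
  RS_integral_is g (cond_cdf G k s t) s t v.

From Stdlib Require Import Reals Lra Lia ZArith.
Open Scope R_scope.

(* Put k = m+1, h = g^(-1/(k+1)) (positive, continuous, increasing) and let
   R be the cumulative hazard.  The identity of the theorem then reads
       int_s^t h^-(k+1) d[((R - R s)/(R t - R s))^k] = 1/(h(s) h(t)^k),
   and the theorem says it holds for all s < t iff R = c h + d with c > 0.
   - Sufficiency: if R = c h + d the integrator is ((h - h s)/(h t - h s))^k
     and E(u) = (u - h s)^k / (h s u^k) is an antiderivative of u^-(k+1)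
     against (u - h s)^k (Cauchy mean value theorem); a telescoping estimate
     evaluates the Stieltjes integral.
   - Necessity: multiplying out, W(t) = (R t - R s)^k satisfies
     d(W(t)/(h s h(t)^k)) = g(t) dW(t); comparing with the antiderivative
     forces W/(h - h s)^k to be constant, i.e. R is affine in h.
   Finally the constant d is identified from h -> tau at the left end of the
   support, where the hazard tends to 0, giving G = 1 - exp(-c(h - tau)). *)

(** * Riemann–Stieltjes sums *)

Lemma tagged_partition_range a b N x xi :
  tagged_partition a b N x xi ->
  (forall i, (i <= N)%nat -> a <= x i <= b) /\
  (forall i, (i < N)%nat -> a <= xi i <= b).
Proof.
  intros [Hx0 [HxN Htag]].
  assert (Hmono : forall i j, (i <= j <= N)%nat -> x i <= x j).
  { intros i j. induction j as [|j IH]; intros Hij.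
    - replace i with O by lia. lra.
    - destruct (Nat.eq_dec i (S j)) as [->|Hne]; [lra|].
      assert (H1 := IH ltac:(lia)). assert (H2 := Htag j ltac:(lia)). lra. }
  assert (Hnodes : forall i, (i <= N)%nat -> a <= x i <= b).
  { intros i Hi. rewrite <- Hx0, <- HxN. split; apply Hmono; lia. }
  split; [exact Hnodes|].
  intros i Hi. assert (H1 := Hnodes i ltac:(lia)). assert (H2 := Hnodes (S i) Hi).
  assert (H3 := Htag i Hi). lra.
Qed.

Lemma RS_sum_scale f F1 F2 C x xi N :
  (forall y, F2 y = C * F1 y) -> RS_sum f F2 x xi N = C * RS_sum f F1 x xi N.
Proof. intros HF. induction N as [|N IH]; simpl; [ring|]. rewrite IH, !HF. ring. Qed.

Lemma RS_sum_ext_nodes f F1 F2 x xi N :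
  (forall i, (i <= N)%nat -> F1 (x i) = F2 (x i)) ->
  RS_sum f F1 x xi N = RS_sum f F2 x xi N.
Proof.
  induction N as [|N IH]; intros HF; simpl; [reflexivity|].
  rewrite IH by (intros i Hi; apply HF; lia). rewrite !HF by lia. reflexivity.
Qed.

Lemma RS_sum_bound f F P Q x xi N :
  (forall i, (i < N)%nat ->
     Rabs (f (xi i) * (F (x (S i)) - F (x i)) - (P (x (S i)) - P (x i)))
       <= Q (x i) - Q (x (S i))) ->
  Rabs (RS_sum f F x xi N - (P (x N) - P (x O))) <= Q (x O) - Q (x N).
Proof.
  induction N as [|N IH]; intros H; simpl.
  - rewrite Rminus_diag, Rminus_0_r, Rabs_R0. lra.
  - assert (H1 := IH (fun i Hi => H i (Nat.lt_lt_succ_r _ _ Hi))).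
    assert (H2 := H N (Nat.lt_succ_diag_r N)).
    replace (Q (x O) - Q (x (S N))) with ((Q (x O) - Q (x N)) + (Q (x N) - Q (x (S N)))) by ring.
    eapply Rle_trans; [|apply Rplus_le_compat; [exact H1 | exact H2]].
    eapply Rle_trans; [|apply Rabs_triang]. right; f_equal; ring.
Qed.

Lemma RS_sum_mono f F lo hi x xi N :
  (forall i, (i < N)%nat -> F (x i) <= F (x (S i))) ->
  (forall i, (i < N)%nat -> lo <= f (xi i) <= hi) ->
  lo * (F (x N) - F (x O)) <= RS_sum f F x xi N <= hi * (F (x N) - F (x O)).
Proof.
  induction N as [|N IH]; intros HF Hf; simpl; [split; right; ring|].
  assert (H1 := IH (fun i Hi => HF i (Nat.lt_lt_succ_r _ _ Hi))
                   (fun i Hi => Hf i (Nat.lt_lt_succ_r _ _ Hi))).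
  assert (H2 := HF N (Nat.lt_succ_diag_r N)).
  assert (H3 := Hf N (Nat.lt_succ_diag_r N)).
  assert (lo * (F (x (S N)) - F (x N)) <= f (xi N) * (F (x (S N)) - F (x N))
          <= hi * (F (x (S N)) - F (x N))).
  { split; apply Rmult_le_compat_r; lra. }
  split; nra.
Qed.

Definition cat_x (m1 : nat) (x1 x2 : nat -> R) (i : nat) : R :=
  if Nat.leb i m1 then x1 i else x2 (i - m1)%nat.
Definition cat_xi (m1 : nat) (x1 x2 : nat -> R) (i : nat) : R :=
  if Nat.ltb i m1 then x1 i else x2 (i - m1)%nat.

Lemma RS_sum_cat f F m1 m2 x1 xi1 x2 xi2 :
  x1 m1 = x2 O ->
  RS_sum f F (cat_x m1 x1 x2) (cat_xi m1 xi1 xi2) (m1 + m2) =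
  RS_sum f F x1 xi1 m1 + RS_sum f F x2 xi2 m2.
Proof.
  intros Hj.
  assert (Hleft : forall j, (j <= m1)%nat ->
     RS_sum f F (cat_x m1 x1 x2) (cat_xi m1 xi1 xi2) j = RS_sum f F x1 xi1 j).
  { induction j as [|j IH]; intros Hj'; simpl; [reflexivity|].
    rewrite IH by lia. unfold cat_x, cat_xi.
    replace (Nat.leb (S j) m1) with true by (symmetry; apply Nat.leb_le; lia).
    replace (Nat.leb j m1) with true by (symmetry; apply Nat.leb_le; lia).
    replace (Nat.ltb j m1) with true by (symmetry; apply Nat.ltb_lt; lia).
    reflexivity. }
  induction m2 as [|m2 IH].
  - rewrite Nat.add_0_r, Hleft by lia. simpl; ring.
  - rewrite Nat.add_succ_r. simpl. rewrite IH. unfold cat_x, cat_xi.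
    replace (Nat.leb (S (m1 + m2)) m1) with false by (symmetry; apply Nat.leb_gt; lia).
    replace (Nat.ltb (m1 + m2) m1) with false by (symmetry; apply Nat.ltb_ge; lia).
    replace (S (m1 + m2) - m1)%nat with (S m2) by lia.
    replace (m1 + m2 - m1)%nat with m2 by lia.
    destruct m2 as [|m2].
    + replace (Nat.leb (m1 + 0) m1) with true by (symmetry; apply Nat.leb_le; lia).
      rewrite Nat.add_0_r, Hj. ring.
    + replace (Nat.leb (m1 + S m2) m1) with false by (symmetry; apply Nat.leb_gt; lia).
      ring.
Qed.

Lemma tagged_cat a b c m1 m2 x1 xi1 x2 xi2 :
  tagged_partition a b m1 x1 xi1 -> tagged_partition b c m2 x2 xi2 ->
  tagged_partition a c (m1 + m2) (cat_x m1 x1 x2) (cat_xi m1 xi1 xi2).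
Proof.
  intros [H1 [H2 H3]] [K1 [K2 K3]]. unfold cat_x, cat_xi. split; [|split].
  - exact H1.
  - destruct (Nat.leb_spec (m1 + m2) m1).
    + assert (m2 = O) by lia. subst. rewrite Nat.add_0_r. congruence.
    + replace (m1 + m2 - m1)%nat with m2 by lia. exact K2.
  - intros i Hi. destruct (Nat.ltb_spec i m1).
    + replace (Nat.leb i m1) with true by (symmetry; apply Nat.leb_le; lia).
      replace (Nat.leb (S i) m1) with true by (symmetry; apply Nat.leb_le; lia).
      apply H3; lia.
    + replace (Nat.leb (S i) m1) with false by (symmetry; apply Nat.leb_gt; lia).
      replace (S i - m1)%nat with (S (i - m1)) by lia.
      destruct (Nat.leb_spec i m1).
      * replace i with m1 by lia. rewrite Nat.sub_diag, H2, <- K1. apply K3. lia.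
      * apply K3. lia.
Qed.

Lemma mesh_cat d m1 m2 x1 x2 :
  x1 m1 = x2 O ->
  (forall i, (i < m1)%nat -> x1 (S i) - x1 i < d) ->
  (forall i, (i < m2)%nat -> x2 (S i) - x2 i < d) ->
  forall i, (i < m1 + m2)%nat -> cat_x m1 x1 x2 (S i) - cat_x m1 x1 x2 i < d.
Proof.
  intros Hj H1 H2 i Hi. unfold cat_x. destruct (Nat.ltb_spec i m1).
  - replace (Nat.leb i m1) with true by (symmetry; apply Nat.leb_le; lia).
    replace (Nat.leb (S i) m1) with true by (symmetry; apply Nat.leb_le; lia).
    apply H1; lia.
  - replace (Nat.leb (S i) m1) with false by (symmetry; apply Nat.leb_gt; lia).
    replace (S i - m1)%nat with (S (i - m1)) by lia.
    destruct (Nat.leb_spec i m1).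
    + replace i with m1 by lia. rewrite Nat.sub_diag, Hj. apply H2. lia.
    + apply H2. lia.
Qed.

Definition upart (a b : R) (N : nat) (i : nat) : R := a + INR i * ((b - a) / INR N).

Lemma upart_ok a b d : a < b -> 0 < d ->
  exists N, tagged_partition a b N (upart a b N) (upart a b N) /\
    (forall i, (i < N)%nat -> upart a b N (S i) - upart a b N i < d).
Proof.
  intros Hab Hd.
  destruct (archimed ((b - a) / d)) as [Hup _].
  assert (Hpos : 0 < (b - a) / d) by (apply Rdiv_lt_0_compat; lra).
  assert (Hz : (0 < up ((b - a) / d))%Z) by (apply lt_IZR; lra).
  set (N := Z.to_nat (up ((b - a) / d))).
  assert (HN : (b - a) / d < INR N).
  { unfold N. rewrite INR_IZR_INZ, Z2Nat.id by lia. lra. }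
  assert (HNp : 0 < INR N) by lra.
  assert (Hstep : (b - a) / INR N < d).
  { apply Rmult_lt_reg_r with (INR N / d); [apply Rdiv_lt_0_compat; lra|].
    replace ((b - a) / INR N * (INR N / d)) with ((b - a) / d) by (field; lra).
    replace (d * (INR N / d)) with (INR N) by (field; lra). exact HN. }
  exists N. unfold upart. split; [split; [|split]|].
  - simpl; ring.
  - field; lra.
  - intros i Hi. rewrite S_INR. assert (0 < (b - a) / INR N) by (apply Rdiv_lt_0_compat; lra). lra.
  - intros i Hi. rewrite S_INR. lra.
Qed.

(* Uniqueness of the integral: both values are approached by the same uniform sums. *)
Lemma RS_unique f F a b I1 I2 : a < b ->
  RS_integral_is f F a b I1 -> RS_integral_is f F a b I2 -> I1 = I2.
Proof.
  intros Hab H1 H2. destruct (Req_dec I1 I2) as [|Hne]; [assumption|].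
  set (e := Rabs (I1 - I2) / 2).
  assert (He : 0 < e) by (unfold e; assert (0 < Rabs (I1 - I2)) by (apply Rabs_pos_lt; lra); lra).
  destruct (H1 e He) as [d1 [Hd1 P1]]. destruct (H2 e He) as [d2 [Hd2 P2]].
  destruct (upart_ok a b (Rmin d1 d2) Hab) as [N [Ht Hm]]; [apply Rmin_pos; assumption|].
  assert (A1 := P1 N _ _ Ht (fun i Hi => Rlt_le_trans _ _ _ (Hm i Hi) (Rmin_l _ _))).
  assert (A2 := P2 N _ _ Ht (fun i Hi => Rlt_le_trans _ _ _ (Hm i Hi) (Rmin_r _ _))).
  set (S := RS_sum f F (upart a b N) (upart a b N) N) in *.
  assert (Rabs (I1 - I2) < 2 * e).
  { replace (I1 - I2) with (-(S - I1) + (S - I2)) by ring.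
    eapply Rle_lt_trans; [apply Rabs_triang|]. rewrite Rabs_Ropp. lra. }
  unfold e in *. lra.
Qed.

Lemma RS_integral_zero f F a b :
  (forall y u v, f y * (F v - F u) = 0) -> RS_integral_is f F a b 0.
Proof.
  intros H0 eps Heps. exists 1. split; [lra|]. intros N x xi _ _.
  replace (RS_sum f F x xi N) with 0; [rewrite Rminus_0_r, Rabs_R0; exact Heps|].
  induction N as [|N IH]; simpl; [reflexivity|]. rewrite H0, <- IH. ring.
Qed.

Lemma RS_integral_ext f F1 F2 a b I :
  (forall y, a <= y <= b -> F1 y = F2 y) ->
  RS_integral_is f F1 a b I -> RS_integral_is f F2 a b I.
Proof.
  intros HF H eps Heps. destruct (H eps Heps) as [d [Hd P]]. exists d. split; [exact Hd|].
  intros N x xi Ht Hm. destruct (tagged_partition_range _ _ _ _ _ Ht) as [Hn _].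
  rewrite <- (RS_sum_ext_nodes f F1 F2) by (intros i Hi; apply HF, Hn, Hi).
  apply P; assumption.
Qed.

Lemma RS_integral_scale f F1 F2 a b I C : 0 < C ->
  (forall y, F2 y = C * F1 y) ->
  RS_integral_is f F1 a b I -> RS_integral_is f F2 a b (C * I).
Proof.
  intros HC HF H eps Heps.
  destruct (H (eps / C) ltac:(apply Rdiv_lt_0_compat; lra)) as [d [Hd P]].
  exists d. split; [exact Hd|]. intros N x xi Ht Hm.
  rewrite (RS_sum_scale f F1 F2 C) by exact HF.
  rewrite <- Rmult_minus_distr_l, Rabs_mult, Rabs_right by lra.
  specialize (P N x xi Ht Hm).
  apply Rmult_lt_compat_l with (r := C) in P; [|lra].
  replace (C * (eps / C)) with eps in P by (field; lra). exact P.
Qed.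

(* This is the discrete form of
   d(int_a^t f dF) = f(t) dF(t) used to differentiate the record identity. *)
Lemma RS_integral_increment f F a b c I1 I2 lo hi :
  a < b -> b < c ->
  RS_integral_is f F a b I1 -> RS_integral_is f F a c I2 ->
  (forall u v, b <= u <= v -> v <= c -> F u <= F v) ->
  (forall u, b <= u <= c -> lo <= f u <= hi) ->
  lo * (F c - F b) <= I2 - I1 <= hi * (F c - F b).
Proof.
  intros Hab Hbc H1 H2 HF Hf.
  assert (Happrox : forall e, 0 < e -> exists S,
            lo * (F c - F b) <= S <= hi * (F c - F b) /\ Rabs (S - (I2 - I1)) < e).
  { intros e He.
    destruct (H1 (e / 2) ltac:(lra)) as [d1 [Hd1 P1]].
    destruct (H2 (e / 2) ltac:(lra)) as [d2 [Hd2 P2]].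
    assert (Hd : 0 < Rmin d1 d2) by (apply Rmin_pos; assumption).
    destruct (upart_ok a b _ Hab Hd) as [N1 [Ht1 Hm1]].
    destruct (upart_ok b c _ Hbc Hd) as [N2 [Ht2 Hm2]].
    set (x1 := upart a b N1) in *. set (x2 := upart b c N2) in *.
    assert (Hj : x1 N1 = x2 O) by (destruct Ht1 as [_ [-> _]]; destruct Ht2 as [-> _]; reflexivity).
    assert (Q1 := P1 N1 _ _ Ht1 (fun i Hi => Rlt_le_trans _ _ _ (Hm1 i Hi) (Rmin_l _ _))).
    assert (Q2 := P2 _ _ _ (tagged_cat _ _ _ _ _ _ _ _ _ Ht1 Ht2)
             (mesh_cat _ _ _ _ _ Hj (fun i Hi => Rlt_le_trans _ _ _ (Hm1 i Hi) (Rmin_r _ _))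
                (fun i Hi => Rlt_le_trans _ _ _ (Hm2 i Hi) (Rmin_r _ _)))).
    rewrite RS_sum_cat in Q2 by exact Hj.
    exists (RS_sum f F x2 x2 N2). split.
    - destruct (tagged_partition_range _ _ _ _ _ Ht2) as [Hn _].
      destruct Ht2 as [E0 [EN Htag]].
      replace (F c - F b) with (F (x2 N2) - F (x2 O)) by (rewrite E0, EN; reflexivity).
      apply RS_sum_mono; intros i Hi.
      + assert (H3 := Htag i Hi). apply HF; [split|]; try apply Hn; lia || lra.
      + apply Hf, Hn. lia.
    - set (S1 := RS_sum f F x1 x1 N1) in *. set (S2 := RS_sum f F x2 x2 N2) in *.
      replace (S2 - (I2 - I1)) with ((S1 + S2 - I2) - (S1 - I1)) by ring.
      eapply Rle_lt_trans; [apply Rabs_triang|]. rewrite Rabs_Ropp. lra. }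
  split; apply Rle_plus_epsilon; intros e He;
    destruct (Happrox e He) as [S [HS HSe]]; apply Rabs_def2 in HSe; lra.
Qed.

(* The error terms telescope against q and
   are made small by the uniform continuity of F. *)
Lemma RS_integral_of_antiderivative f F Phi q a b :
  a < b ->
  (forall u, a <= u <= b -> continuity_pt F u) ->
  (forall u v, a <= u <= v -> v <= b -> q v <= q u) ->
  (forall u z v, a <= u <= z -> z <= v <= b ->
     Rabs (f z * (F v - F u) - (Phi v - Phi u)) <= (q u - q v) * (F v - F u)) ->
  RS_integral_is f F a b (Phi b - Phi a).
Proof.
  intros Hab HFc Hq Hterm eps Heps.
  assert (Hunif : uniform_continuity F (fun u => a <= u <= b))
    by (apply Heine; [apply compact_P3 | exact HFc]).
  set (C := q a - q b + 1).
  assert (HC : 0 < C) by (assert (HH := Hq a b ltac:(lra) ltac:(lra)); unfold C; lra).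
  destruct (Hunif (mkposreal (eps / C) (Rdiv_lt_0_compat _ _ Heps HC))) as [d Hd].
  simpl in Hd. exists d. split; [apply cond_pos|].
  intros N x xi Ht Hmesh.
  destruct (tagged_partition_range _ _ _ _ _ Ht) as [Hn Hxi].
  destruct Ht as [E0 [EN Htag]].
  rewrite <- E0, <- EN at 1.
  apply Rle_lt_trans with (eps / C * q (x O) - eps / C * q (x N)).
  - apply (RS_sum_bound f F Phi (fun u => eps / C * q u)).
    intros i Hi.
    assert (B1 := Hn i ltac:(lia)). assert (B2 := Hn (S i) Hi). assert (Ht := Htag i Hi).
    assert (Hqi := Hq (x i) (x (S i)) ltac:(lra) ltac:(lra)).
    assert (Hosc : F (x (S i)) - F (x i) < eps / C).
    { assert (HH := Hd (x (S i)) (x i) B2 B1).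
      rewrite Rabs_right in HH by (assert (HH' := Hmesh i Hi); lra).
      specialize (HH (Hmesh i Hi)). apply Rabs_def2 in HH. lra. }
    eapply Rle_trans; [apply Hterm; lra|].
    replace (eps / C * q (x i) - eps / C * q (x (S i))) with ((q (x i) - q (x (S i))) * (eps / C)) by ring.
    apply Rmult_le_compat_l; lra.
  - rewrite E0, EN.
    replace (eps / C * q a - eps / C * q b) with (eps * ((q a - q b) / C)) by (field; lra).
    rewrite <- (Rmult_1_r eps) at 2. apply Rmult_lt_compat_l; [lra|].
    apply Rmult_lt_reg_r with C; [lra|]. unfold Rdiv. rewrite Rmult_assoc, Rinv_l by lra.
    unfold C. lra.
Qed.

Lemma small_zero d : (forall e, 0 < e -> Rabs d < e) -> d = 0.
Proof.
  intros H. destruct (Req_dec d 0) as [|Hd]; [assumption|].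
  assert (HH := H (Rabs d) (Rabs_pos_lt d Hd)). lra.
Qed.

Lemma pow_div x y n : (x / y) ^ n = x ^ n / y ^ n.
Proof. unfold Rdiv. rewrite Rpow_mult_distr, pow_inv. reflexivity. Qed.

Lemma pow_lt_mono x y n : 0 <= x < y -> x ^ S n < y ^ S n.
Proof.
  intros H. induction n as [|n IH]; [simpl; lra|].
  change (x * x ^ S n < y * y ^ S n).
  assert (0 <= x ^ S n) by (apply pow_le; lra). nra.
Qed.

Lemma pow_inj_nonneg x y n : 0 <= x -> 0 <= y -> x ^ S n = y ^ S n -> x = y.
Proof.
  intros Hx Hy H. destruct (Rtotal_order x y) as [Hl|[He|Hl]]; [|assumption|].
  - assert (HH := pow_lt_mono x y n (conj Hx Hl)). lra.
  - assert (HH := pow_lt_mono y x n (conj Hy Hl)). lra.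
Qed.

(** For a > 0 put
      D_a(u) = (u - a)^(m+1)   and   E_a(u) = (u - a)^(m+1) / (a u^(m+1)),
    so that E_a' = D_a' / u^(m+2): E_a is the Stieltjes antiderivative of
    u^-(m+2) against D_a. *)

Lemma derive_Dpow a m u :
  derivable_pt_lim (fun v => (v - a) ^ S m) u (INR (S m) * (u - a) ^ m).
Proof.
  assert (H1 : derivable_pt_lim (fun v => v - a) u 1).
  { replace 1 with (1 - 0) by ring. apply (derivable_pt_lim_minus id (fct_cte a)).
    - apply derivable_pt_lim_id.
    - apply derivable_pt_lim_const. }
  assert (H2 := derivable_pt_lim_comp _ _ _ _ _ H1 (derivable_pt_lim_pow (u - a) (S m))).
  replace (INR (S m) * (u - a) ^ m) with (INR (S m) * (u - a) ^ Nat.pred (S m) * 1) by (simpl; ring).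
  exact H2.
Qed.

Lemma derive_Eanti a m u : 0 < a -> 0 < u ->
  derivable_pt_lim (fun v => (v - a) ^ S m / (a * v ^ S m)) u
     (INR (S m) * (u - a) ^ m / u ^ S (S m)).
Proof.
  intros Ha Hu.
  assert (H1 : derivable_pt_lim (fun v => a * v ^ S m) u (0 * u ^ S m + a * (INR (S m) * u ^ m))).
  { apply (derivable_pt_lim_mult (fct_cte a) (fun v => v ^ S m)).
    - apply derivable_pt_lim_const.
    - apply (derivable_pt_lim_pow u (S m)). }
  assert (Hn : a * u ^ S m <> 0) by (assert (0 < u ^ S m) by (apply pow_lt; lra); nra).
  assert (H2 := derivable_pt_lim_div _ _ _ _ _ (derive_Dpow a m u) H1 Hn).
  replace (INR (S m) * (u - a) ^ m / u ^ S (S m)) with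
    ((INR (S m) * (u - a) ^ m * (a * u ^ S m) - (0 * u ^ S m + a * (INR (S m) * u ^ m)) * (u - a) ^ S m)
       / Rsqr (a * u ^ S m)).
  { exact H2. }
  assert (0 < u ^ m) by (apply pow_lt; lra).
  simpl. unfold Rsqr. field. split; lra.
Qed.

(* Cauchy mean value theorem applied to E_a and D_a: the increment of E_a over
   [u1,u2] is the increment of D_a times u^-(m+2) at some intermediate u. *)
Lemma Eanti_increment a m u1 u2 : 0 < a -> a <= u1 -> u1 <= u2 ->
  / u2 ^ S (S m) * ((u2 - a) ^ S m - (u1 - a) ^ S m)
    <= (u2 - a) ^ S m / (a * u2 ^ S m) - (u1 - a) ^ S m / (a * u1 ^ S m)
    <= / u1 ^ S (S m) * ((u2 - a) ^ S m - (u1 - a) ^ S m).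
Proof.
  intros Ha H1 H12.
  destruct (Req_dec u1 u2) as [<-|Hne]; [split; right; ring|].
  set (D := fun u => (u - a) ^ S m).
  set (E := fun u => (u - a) ^ S m / (a * u ^ S m)).
  set (dD := D u2 - D u1). set (dE := E u2 - E u1).
  destruct (MVT_cor2 (fun u => E u * dD - D u * dE)
              (fun c => (INR (S m) * (c - a) ^ m / c ^ S (S m)) * dD - (INR (S m) * (c - a) ^ m) * dE)
              u1 u2) as [c [Hc1 Hc2]]; [lra| |].
  { intros c Hc.
    apply (derivable_pt_lim_minus (fun u => E u * dD) (fun u => D u * dE)).
    - replace (INR (S m) * (c - a) ^ m / c ^ S (S m) * dD) with
        (INR (S m) * (c - a) ^ m / c ^ S (S m) * fct_cte dD c + E c * 0) by (unfold fct_cte; ring).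
      apply (derivable_pt_lim_mult E (fct_cte dD)).
      + apply derive_Eanti; lra.
      + apply derivable_pt_lim_const.
    - replace (INR (S m) * (c - a) ^ m * dE) with
        (INR (S m) * (c - a) ^ m * fct_cte dE c + D c * 0) by (unfold fct_cte; ring).
      apply (derivable_pt_lim_mult D (fct_cte dE)).
      + apply derive_Dpow.
      + apply derivable_pt_lim_const. }
  replace (E u2 * dD - D u2 * dE - (E u1 * dD - D u1 * dE)) with 0 in Hc1 by (unfold dD, dE; ring).
  assert (Hcm : 0 < (c - a) ^ m) by (apply pow_lt; lra).
  assert (Hcp : 0 < c ^ S (S m)) by (apply pow_lt; lra).
  assert (Hm : 0 < INR (S m)) by (apply lt_0_INR; lia).
  assert (HdE : dE = dD / c ^ S (S m)).
  { assert (Hz : (INR (S m) * (c - a) ^ m) * (dD / c ^ S (S m) - dE) = 0).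
    { apply Rmult_eq_reg_r with (u2 - u1); [|lra].
      rewrite Rmult_0_l, Hc1. field. lra. }
    apply Rmult_integral in Hz. destruct Hz as [Hz|Hz]; [nra|lra]. }
  assert (HdD : 0 <= dD) by (unfold dD, D; assert (HH := pow_incr (u1 - a) (u2 - a) (S m)); lra).
  change (/ u2 ^ S (S m) * dD <= dE <= / u1 ^ S (S m) * dD).
  rewrite HdE. unfold Rdiv. rewrite (Rmult_comm dD).
  split; apply Rmult_le_compat_r; [assumption| |assumption|];
    apply Rinv_le_contravar; try (apply pow_lt; lra); apply pow_incr; lra.
Qed.

(** * The record identity in the variable h = g^(-1/(k+1))

    Throughout, Sp is the support (an interval), k = m+1, h is positive,
    continuous and strictly increasing on Sp, g = h^-(k+1), and Rf plays the
    role of the cumulative hazard R.  The conditional expectation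
    E[g(Y(n)) | Y(n-k)=s, Y(n+1)=t] = g(t)^(k/(k+1)) g(s)^(1/(k+1)) reads
        int_s^t g d[((Rf - Rf s)/(Rf t - Rf s))^k] = 1 / (h(s) h(t)^k). *)

Section HazardModel.

Variables (Sp : R -> Prop) (g h Rf : R -> R) (m : nat).

Hypothesis Sp_interval : forall x y z, Sp x -> Sp z -> x <= y <= z -> Sp y.
Hypothesis h_pos : forall y, Sp y -> 0 < h y.
Hypothesis h_strict : forall x y, Sp x -> Sp y -> x < y -> h x < h y.
Hypothesis h_cont : forall y, Sp y -> continuity_pt h y.
Hypothesis g_of_h : forall y, Sp y -> g y = / h y ^ S (S m).

Definition record_identity (s t : R) : Prop :=
  RS_integral_is g (fun x => ((Rf x - Rf s) / (Rf t - Rf s)) ^ S m) s t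
    (/ (h s * h t ^ S m)).

Definition Dpow (s z : R) : R := (h z - h s) ^ S m.
Definition Eanti (s z : R) : R := Dpow s z / (h s * h z ^ S m).

Lemma h_le x y : Sp x -> Sp y -> x <= y -> h x <= h y.
Proof.
  intros Hx Hy Hxy. destruct (Req_dec x y) as [->|]; [lra|].
  apply Rlt_le, h_strict; [assumption | assumption | lra].
Qed.

Lemma g_le x y : Sp x -> Sp y -> x <= y -> g y <= g x.
Proof.
  intros Hx Hy Hxy. rewrite !g_of_h by assumption. apply Rinv_le_contravar.
  - apply pow_lt, h_pos, Hx.
  - apply pow_incr. split; [apply Rlt_le, h_pos, Hx | apply h_le; assumption].
Qed.

Lemma Dpow_mono s x y : Sp s -> Sp y -> s <= x <= y -> 0 <= Dpow s x <= Dpow s y.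
Proof.
  intros Hs Hy Hsxy. assert (Hx : Sp x) by (apply (Sp_interval s x y); assumption).
  assert (H1 := h_le s x Hs Hx ltac:(lra)). assert (H2 := h_le x y Hx Hy ltac:(lra)).
  unfold Dpow. split; [apply pow_le; lra | apply pow_incr; lra].
Qed.

Lemma Dpow_cont s z : Sp z -> continuity_pt (Dpow s) z.
Proof.
  intros Hz. apply (continuity_pt_comp h (fun u => (u - h s) ^ S m)).
  - apply h_cont, Hz.
  - apply derivable_continuous_pt. exists (INR (S m) * (h z - h s) ^ m). apply derive_Dpow.
Qed.

Lemma Eanti_increment_on s x y : Sp s -> Sp y -> s <= x <= y ->
  g y * (Dpow s y - Dpow s x) <= Eanti s y - Eanti s x <= g x * (Dpow s y - Dpow s x).
Proof.
  intros Hs Hy Hsxy. assert (Hx : Sp x) by (apply (Sp_interval s x y); assumption).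
  rewrite !g_of_h by assumption. apply Eanti_increment.
  - apply h_pos, Hs.
  - apply h_le; [assumption | assumption | lra].
  - apply h_le; [assumption | assumption | lra].
Qed.

(** ** Sufficiency: an affine hazard Rf = c h + d satisfies the identity *)

Lemma identity_of_affine c d : 0 < c -> (forall y, Sp y -> Rf y = c * h y + d) ->
  forall s t, Sp s -> Sp t -> s < t -> record_identity s t.
Proof.
  intros Hc Haff s t Hs Ht Hst.
  assert (Hin : forall z, s <= z <= t -> Sp z) by (intros z Hz; apply (Sp_interval s z t); assumption).
  assert (Hhst : h s < h t) by (apply h_strict; assumption).
  set (K := Dpow s t).
  assert (HK : 0 < K) by (apply pow_lt; lra).
  apply RS_integral_ext with (F1 := fun z => Dpow s z / K).
  { intros z Hz. unfold K, Dpow. rewrite <- pow_div. f_equal.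
    assert (c * (h t - h s) <> 0) by (apply Rmult_integral_contrapositive; split; lra).
    rewrite (Haff z), (Haff s), (Haff t) by (apply Hin; lra). field. split; lra. }
  replace (/ (h s * h t ^ S m)) with (Eanti s t / K - Eanti s s / K).
  2: { assert (0 < h s) by (apply h_pos, Hs). assert (0 < h t ^ S m) by (apply pow_lt; lra).
       assert (0 < h s ^ S m) by (apply pow_lt; lra).
       unfold K, Eanti, Dpow. rewrite Rminus_diag, pow_i by lia. field. unfold K, Dpow in HK. repeat split; lra. }
  apply RS_integral_of_antiderivative with (Phi := fun z => Eanti s z / K) (q := g);
    [exact Hst | | |].
  - intros u Hu. apply continuity_pt_div; [apply Dpow_cont, Hin, Hu | apply continuity_pt_const | lra].
    intros v w; reflexivity.
  - intros u v Huv Hv. apply g_le; [apply Hin; lra | apply Hin; lra | lra].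
  - intros u z v Huz Hzv.
    destruct (Eanti_increment_on s u v Hs (Hin v ltac:(lra)) ltac:(lra)) as [E1 E2].
    assert (Hg1 := g_le u z (Hin u ltac:(lra)) (Hin z ltac:(lra)) ltac:(lra)).
    assert (Hg2 := g_le z v (Hin z ltac:(lra)) (Hin v ltac:(lra)) ltac:(lra)).
    assert (HD := Dpow_mono s u v Hs (Hin v ltac:(lra)) ltac:(lra)).
    replace (g z * (Dpow s v / K - Dpow s u / K) - (Eanti s v / K - Eanti s u / K)) with
      ((g z * (Dpow s v - Dpow s u) - (Eanti s v - Eanti s u)) / K) by (field; lra).
    replace ((g u - g v) * (Dpow s v / K - Dpow s u / K)) with
      ((g u - g v) * (Dpow s v - Dpow s u) / K) by (field; lra).
    unfold Rdiv. rewrite Rabs_mult, (Rabs_right (/ K)) by (apply Rle_ge, Rlt_le, Rinv_0_lt_compat; lra).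
    apply Rmult_le_compat_r; [apply Rlt_le, Rinv_0_lt_compat; lra|].
    assert (g v * (Dpow s v - Dpow s u) <= g z * (Dpow s v - Dpow s u) <= g u * (Dpow s v - Dpow s u))
      by (split; apply Rmult_le_compat_r; lra).
    apply Rabs_le. lra.
Qed.

(** ** Necessity: the identity forces Rf to be an affine function of h *)

Section Necessity.

Hypothesis Rf_mono : forall x y, Sp x -> Sp y -> x <= y -> Rf x <= Rf y.
Hypothesis identity : forall s t, Sp s -> Sp t -> s < t -> record_identity s t.

(* Were Rf constant on [s,t], the integrator would vanish and so would the
   integral, whereas 1/(h s h(t)^k) > 0. *)
Lemma Rf_strict s t : Sp s -> Sp t -> s < t -> Rf s < Rf t.
Proof.
  intros Hs Ht Hst. destruct (Rf_mono s t Hs Ht (Rlt_le _ _ Hst)) as [|Heq]; [assumption|].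
  exfalso.
  assert (Hv : 0 < / (h s * h t ^ S m)).
  { apply Rinv_0_lt_compat, Rmult_lt_0_compat; [apply h_pos, Hs | apply pow_lt, h_pos, Ht]. }
  assert (Hzero : / (h s * h t ^ S m) = 0).
  { apply (RS_unique g (fun x => ((Rf x - Rf s) / (Rf t - Rf s)) ^ S m) s t); [exact Hst | apply identity; assumption|].
    apply RS_integral_zero. intros y u v.
    rewrite <- Heq, Rminus_diag. unfold Rdiv. rewrite Rinv_0, !Rmult_0_r. simpl. ring. }
  lra.
Qed.

(* W_s(z) = (Rf z - Rf s)^k, the unnormalized conditional distribution function. *)
Definition Wpow (s z : R) : R := (Rf z - Rf s) ^ S m.

Lemma Wpow_mono s x y : Sp s -> Sp y -> s <= x <= y -> 0 <= Wpow s x <= Wpow s y.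
Proof.
  intros Hs Hy Hsxy. assert (Hx : Sp x) by (apply (Sp_interval s x y); assumption).
  assert (H1 := Rf_mono s x Hs Hx ltac:(lra)). assert (H2 := Rf_mono x y Hx Hy ltac:(lra)).
  unfold Wpow. split; [apply pow_le; lra | apply pow_incr; lra].
Qed.

Lemma identity_unnormalized s t : Sp s -> Sp t -> s < t ->
  RS_integral_is g (Wpow s) s t (Wpow s t * / (h s * h t ^ S m)).
Proof.
  intros Hs Ht Hst. assert (HR := Rf_strict s t Hs Ht Hst).
  apply RS_integral_scale with (F1 := fun x => ((Rf x - Rf s) / (Rf t - Rf s)) ^ S m).
  - apply pow_lt. lra.
  - intros y. unfold Wpow. rewrite <- Rpow_mult_distr. f_equal. field. lra.
  - apply identity; assumption.
Qed.

Lemma Wpow_increment s t t' : Sp s -> Sp t' -> s < t -> t < t' ->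
  g t' * (Wpow s t' - Wpow s t)
   <= Wpow s t' * / (h s * h t' ^ S m) - Wpow s t * / (h s * h t ^ S m)
   <= g t * (Wpow s t' - Wpow s t).
Proof.
  intros Hs Ht' Hst Htt'.
  assert (Ht : Sp t) by (apply (Sp_interval s t t'); [assumption | assumption | lra]).
  apply (RS_integral_increment g (Wpow s) s t t');
    [exact Hst | exact Htt' | apply identity_unnormalized; assumption
    | apply identity_unnormalized; [assumption | assumption | lra] | |].
  - intros u v Huv Hv.
    assert (Sv : Sp v) by (apply (Sp_interval s v t'); [assumption | assumption | lra]).
    apply (Wpow_mono s u v Hs Sv). lra.
  - intros u Hu. assert (Su : Sp u) by (apply (Sp_interval s u t'); [assumption | assumption | lra]).
    split; apply g_le; (assumption || lra).
Qed.

(* The ratio Z_s = W_s / D_s, which the identity will force to be constant,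
   and the weight E_s - g D_s = ((h - h s)/h)^(k+1) / h s appearing when
   the increments of W_s = Z_s D_s and of E_s are compared. *)
Definition ratio (s z : R) : R := Wpow s z / Dpow s z.
Definition weight (s z : R) : R := Eanti s z - g z * Dpow s z.

Lemma weight_bounds s t0 z : Sp s -> Sp z -> s < t0 <= z -> 0 < weight s t0 <= weight s z.
Proof.
  intros Hs Hz Hst.
  assert (Ht0 : Sp t0) by (apply (Sp_interval s t0 z); [assumption | assumption | lra]).
  assert (Hformula : forall y, Sp y -> weight s y = (1 - h s / h y) ^ S (S m) / h s).
  { intros y Hy. assert (0 < h y) by (apply h_pos, Hy). assert (0 < h s) by (apply h_pos, Hs).
    assert (0 < h y ^ m) by (apply pow_lt; lra).
    unfold weight, Eanti, Dpow. rewrite g_of_h by assumption.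
    replace (1 - h s / h y) with ((h y - h s) / h y) by (field; lra).
    rewrite pow_div. simpl. field. repeat split; lra. }
  assert (Ha : 0 < h s) by (apply h_pos, Hs).
  assert (H0 : h s < h t0) by (apply h_strict; [assumption | assumption | lra]).
  assert (H1 : h t0 <= h z) by (apply h_le; [assumption | assumption | lra]).
  assert (Hq : h s / h z <= h s / h t0) by (apply Rmult_le_compat_l; [lra | apply Rinv_le_contravar; lra]).
  assert (Hq0 : h s / h t0 < 1) by (apply Rmult_lt_reg_r with (h t0); [lra|]; field_simplify; lra).
  rewrite !Hformula by assumption. unfold Rdiv at 1 3. split.
  - apply Rmult_lt_0_compat; [apply pow_lt; lra | apply Rinv_0_lt_compat; lra].
  - apply Rmult_le_compat_r; [apply Rlt_le, Rinv_0_lt_compat; lra|]. apply pow_incr. lra.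
Qed.

Lemma ratio_bounds s t0 t1 z : Sp s -> Sp t1 -> s < t0 -> t0 <= z <= t1 ->
  0 <= ratio s z <= Wpow s t1 / Dpow s t0.
Proof.
  intros Hs Ht1 Hst0 Hz.
  assert (Sz : Sp z) by (apply (Sp_interval s z t1); [assumption | assumption | lra]).
  assert (St0 : Sp t0) by (apply (Sp_interval s t0 t1); [assumption | assumption | lra]).
  assert (HD0 : 0 < Dpow s t0) by (apply pow_lt; assert (HH := h_strict s t0 Hs St0 Hst0); lra).
  assert (HD := Dpow_mono s t0 z Hs Sz ltac:(lra)).
  assert (HW := Wpow_mono s z t1 Hs Ht1 ltac:(lra)).
  unfold ratio, Rdiv. split.
  - apply Rmult_le_pos; [lra | apply Rlt_le, Rinv_0_lt_compat; lra].
  - apply Rle_trans with (Wpow s t1 * / Dpow s z).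
    + apply Rmult_le_compat_r; [apply Rlt_le, Rinv_0_lt_compat|]; lra.
    + apply Rmult_le_compat_l; [lra | apply Rinv_le_contravar; lra].
Qed.

(* Comparing Wpow_increment (for W_s = Z_s D_s) with Eanti_increment_on on
   [x,y] bounds the increment of Z_s by P = (g x - g y)(D_s y - D_s x). *)
Lemma ratio_pair_bound s x y : Sp s -> Sp y -> s < x -> x < y ->
  (ratio s y - ratio s x) * weight s x
    <= ratio s y * ((g x - g y) * (Dpow s y - Dpow s x)) /\
  - (ratio s x * ((g x - g y) * (Dpow s y - Dpow s x)))
    <= (ratio s y - ratio s x) * weight s y.
Proof.
  intros Hs Hy Hsx Hxy.
  assert (Hx : Sp x) by (apply (Sp_interval s x y); [assumption | assumption | lra]).
  assert (HDx : 0 < Dpow s x) by (apply pow_lt; assert (HH := h_strict s x Hs Hx Hsx); lra).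
  assert (HDy : 0 < Dpow s y) by (apply pow_lt; assert (HH := h_strict s y Hs Hy ltac:(lra)); lra).
  assert (HZx := proj1 (ratio_bounds s x y x Hs Hy Hsx ltac:(lra))).
  assert (HZy := proj1 (ratio_bounds s x y y Hs Hy Hsx ltac:(lra))).
  assert (HW : forall z, Sp z -> 0 < Dpow s z ->
            Wpow s z = ratio s z * Dpow s z /\
            Wpow s z * / (h s * h z ^ S m) = ratio s z * Eanti s z).
  { intros z Hz HDz. assert (0 < h s) by (apply h_pos, Hs).
    assert (0 < h z ^ S m) by (apply pow_lt, h_pos, Hz).
    unfold ratio, Eanti. split; field; repeat split; lra. }
  destruct (HW x Hx HDx) as [Wx Vx]. destruct (HW y Hy HDy) as [Wy Vy].
  assert (Hsw := Wpow_increment s x y Hs Hy Hsx Hxy).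
  rewrite Vx, Vy, Wx, Wy in Hsw.
  assert (HE := Eanti_increment_on s x y Hs Hy ltac:(lra)).
  unfold weight. split.
  - assert (0 <= ratio s y * (Eanti s y - Eanti s x - g y * (Dpow s y - Dpow s x)))
      by (apply Rmult_le_pos; lra). lra.
  - assert (0 <= ratio s x * (g x * (Dpow s y - Dpow s x) - (Eanti s y - Eanti s x)))
      by (apply Rmult_le_pos; lra). lra.
Qed.

(* On [t0,t1] the bounds 0 <= Z_s <= Zm and weight >= weight(t0) > 0 turn
   ratio_pair_bound into |dZ_s| weight(t0) <= Zm (g x - g y)(D_s y - D_s x). *)
Lemma ratio_increment_bound s t0 t1 x y : Sp s -> Sp t1 -> s < t0 -> t0 <= x -> x < y -> y <= t1 ->
  Rabs (ratio s y - ratio s x) * weight s t0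
    <= Wpow s t1 / Dpow s t0 * ((g x - g y) * (Dpow s y - Dpow s x)).
Proof.
  intros Hs Ht1 Hst0 Hx Hxy Hy.
  assert (Sy : Sp y) by (apply (Sp_interval s y t1); [assumption | assumption | lra]).
  assert (Sx : Sp x) by (apply (Sp_interval s x y); [assumption | assumption | lra]).
  destruct (ratio_pair_bound s x y Hs Sy ltac:(lra) Hxy) as [P1 P2].
  set (P := (g x - g y) * (Dpow s y - Dpow s x)) in *.
  assert (HP : 0 <= P).
  { assert (HH := g_le x y Sx Sy ltac:(lra)). assert (HH' := Dpow_mono s x y Hs Sy ltac:(lra)).
    apply Rmult_le_pos; lra. }
  destruct (ratio_bounds s t0 t1 x Hs Ht1 Hst0 ltac:(lra)) as [Zx0 Zx1].
  destruct (ratio_bounds s t0 t1 y Hs Ht1 Hst0 ltac:(lra)) as [Zy0 Zy1].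
  assert (Px := proj2 (weight_bounds s t0 x Hs Sx ltac:(lra))).
  assert (Py := proj2 (weight_bounds s t0 y Hs Sy ltac:(lra))).
  destruct (Rle_dec (ratio s x) (ratio s y)).
  - rewrite Rabs_right by lra.
    apply Rle_trans with ((ratio s y - ratio s x) * weight s x); [apply Rmult_le_compat_l; lra|].
    apply Rle_trans with (ratio s y * P); [exact P1 | apply Rmult_le_compat_r; lra].
  - rewrite Rabs_left, Ropp_minus_distr by lra.
    apply Rle_trans with ((ratio s x - ratio s y) * weight s y); [apply Rmult_le_compat_l; lra|].
    apply Rle_trans with (ratio s x * P); [lra | apply Rmult_le_compat_r; lra].
Qed.

(* Z_s is constant to the right of s: its increments are bounded by
   (q x - q y)(D_s y - D_s x) with q a multiple of g, so Z_s has zero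
   integrand against D_s while its "integral" is Z_s t1 - Z_s t0. *)
Lemma ratio_const s t0 t1 : Sp s -> Sp t1 -> s < t0 -> t0 < t1 -> ratio s t1 = ratio s t0.
Proof.
  intros Hs Ht1 Hst0 H01.
  assert (Hin : forall z, t0 <= z <= t1 -> Sp z)
    by (intros z Hz; apply (Sp_interval s z t1); [assumption | assumption | lra]).
  set (w0 := weight s t0). set (Zm := Wpow s t1 / Dpow s t0).
  assert (Hw0 : 0 < w0) by (apply (weight_bounds s t0 t0 Hs (Hin t0 ltac:(lra))); lra).
  assert (HZm : 0 <= Zm) by (assert (HH := ratio_bounds s t0 t1 t0 Hs Ht1 Hst0 ltac:(lra)); unfold Zm; lra).
  set (q := fun z => Zm / w0 * g z).
  apply Rminus_diag_uniq.
  apply (RS_unique (fun _ => 0) (Dpow s) t0 t1); [exact H01 | |apply RS_integral_zero; intros; ring].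
  apply RS_integral_of_antiderivative with (q := q); [exact H01 | | |].
  - intros u Hu. apply Dpow_cont, Hin, Hu.
  - intros u v Hu Hv. unfold q. apply Rmult_le_compat_l.
    + apply Rmult_le_pos; [lra | apply Rlt_le, Rinv_0_lt_compat; lra].
    + apply g_le; [apply Hin; lra | apply Hin; lra | lra].
  - intros u z v Huz Hzv. rewrite Rmult_0_l, Rminus_0_l, Rabs_Ropp.
    destruct (Req_dec u v) as [<-|Huv]; [rewrite !Rminus_diag, Rabs_R0; lra|].
    apply Rmult_le_reg_r with w0; [exact Hw0|].
    replace ((q u - q v) * (Dpow s v - Dpow s u) * w0) with (Zm * ((g u - g v) * (Dpow s v - Dpow s u)))
      by (unfold q; field; lra).
    apply ratio_increment_bound; (assumption || lra).
Qed.

Lemma slope_const s t t' : Sp s -> Sp t -> Sp t' -> s < t -> s < t' ->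
  (Rf t - Rf s) / (h t - h s) = (Rf t' - Rf s) / (h t' - h s).
Proof.
  intros Hs Ht Ht' Hst Hst'.
  assert (Hslope : forall z, Sp z -> s < z -> ratio s z = ((Rf z - Rf s) / (h z - h s)) ^ S m).
  { intros z Hz Hsz. unfold ratio, Wpow, Dpow. rewrite pow_div. reflexivity. }
  assert (Hnonneg : forall z, Sp z -> s < z -> 0 <= (Rf z - Rf s) / (h z - h s)).
  { intros z Hz Hsz. assert (HR := Rf_strict s z Hs Hz Hsz). assert (Hh := h_strict s z Hs Hz Hsz).
    apply Rlt_le, Rdiv_lt_0_compat; lra. }
  apply (pow_inj_nonneg _ _ m); [apply Hnonneg; assumption | apply Hnonneg; assumption|].
  rewrite <- !Hslope by assumption.
  destruct (Rtotal_order t t') as [Hl|[->|Hl]]; [|reflexivity|].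
  - symmetry. apply ratio_const; assumption.
  - apply ratio_const; assumption.
Qed.

(* Gluing the chord slopes from s0 and from points left of s0: Rf = c h + d. *)
Lemma hazard_affine s0 t1 : Sp s0 -> Sp t1 -> s0 < t1 ->
  exists c d, 0 < c /\ forall y, Sp y -> Rf y = c * h y + d.
Proof.
  intros Hs0 Ht1 H01.
  assert (Hh01 := h_strict s0 t1 Hs0 Ht1 H01).
  set (c := (Rf t1 - Rf s0) / (h t1 - h s0)).
  exists c, (Rf s0 - c * h s0). split.
  { assert (HR := Rf_strict s0 t1 Hs0 Ht1 H01). apply Rdiv_lt_0_compat; lra. }
  intros y Hy. destruct (Rtotal_order s0 y) as [Hl|[<-|Hl]]; [| ring |].
  - assert (E := slope_const s0 y t1 Hs0 Hy Ht1 Hl H01). fold c in E.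
    assert (Hh := h_strict s0 y Hs0 Hy Hl).
    replace (Rf y) with ((Rf y - Rf s0) / (h y - h s0) * (h y - h s0) + Rf s0) by (field; lra).
    rewrite E. ring.
  - assert (Hhy := h_strict y s0 Hy Hs0 Hl).
    assert (E := slope_const y s0 t1 Hy Hs0 Ht1 Hl ltac:(lra)).
    set (cy := (Rf s0 - Rf y) / (h s0 - h y)) in E.
    assert (E1 : Rf s0 - Rf y = cy * (h s0 - h y)) by (unfold cy; field; lra).
    assert (E2 : Rf t1 - Rf y = cy * (h t1 - h y)) by (rewrite E; field; lra).
    assert (Hcy : cy = c).
    { unfold c. replace (Rf t1 - Rf s0) with (cy * (h t1 - h s0)) by lra. field. lra. }
    rewrite Hcy in E1. lra.
Qed.

End Necessity.

Theorem record_identity_iff_affine :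
  (forall x y, Sp x -> Sp y -> x <= y -> Rf x <= Rf y) ->
  (exists s0 t1, Sp s0 /\ Sp t1 /\ s0 < t1) ->
  (forall s t, Sp s -> Sp t -> s < t -> record_identity s t) <->
  (exists c d, 0 < c /\ forall y, Sp y -> Rf y = c * h y + d).
Proof.
  intros Hmono [s0 [t1 [Hs0 [Ht1 H01]]]]. split.
  - intros Hid. exact (hazard_affine Hmono Hid s0 t1 Hs0 Ht1 H01).
  - intros [c [d [Hc Haff]]]. exact (identity_of_affine c d Hc Haff).
Qed.

End HazardModel.

Section ContinuousCdf.

Variable G : R -> R.
Hypothesis HG : is_cont_cdf G.

Lemma supp_interval x y z : in_supp G x -> in_supp G z -> x <= y <= z -> in_supp G y.
Proof.
  destruct HG as [Hmon _]. intros [Hx1 Hx2] [Hz1 Hz2] [Hxy Hyz].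
  assert (H1 := Hmon x y Hxy). assert (H2 := Hmon y z Hyz). split; lra.
Qed.

(* By the intermediate value theorem every level eta in (0, G y0) is attained left of y0. *)
Lemma cdf_attains eta y0 : 0 < eta -> eta < G y0 -> exists z, G z = eta /\ z < y0.
Proof.
  destruct HG as [Hmon [Hcont [Hlo _]]]. intros He Hy.
  destruct (Hlo eta He) as [M HM].
  set (x1 := Rmin M (y0 - 1)).
  assert (Hx1 : G x1 < eta) by (apply HM; unfold x1; apply Rmin_l).
  assert (Hx1y : x1 < y0) by (unfold x1; assert (HH := Rmin_r M (y0 - 1)); lra).
  assert (Hc : continuity (fun x => G x - eta))
    by (apply (continuity_minus G (fct_cte eta)); [exact Hcont | apply continuity_const; intros a b; reflexivity]).
  destruct (IVT (fun x => G x - eta) x1 y0 Hc Hx1y ltac:(lra) ltac:(lra)) as [z [[_ Hz1] Hz2]].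
  exists z. split; [lra|]. destruct Hz1 as [Hl|Heq]; [exact Hl | subst z; lra].
Qed.

Lemma supp_two_points : exists s0 t1, in_supp G s0 /\ in_supp G t1 /\ s0 < t1.
Proof.
  destruct HG as [Hmon [Hcont [_ Hhi]]].
  destruct (Hhi (1/2) ltac:(lra)) as [M HM]. assert (HMM := HM M (Rle_refl _)).
  destruct (cdf_attains (1/2) M ltac:(lra) ltac:(lra)) as [s0 [Hs0 _]].
  assert (Hc := Hcont s0). unfold continuity_pt, continue_in, limit1_in, limit_in in Hc.
  destruct (Hc (1/2) ltac:(lra)) as [alp [Halp Hnear]].
  assert (Hs0t : G s0 <= G (s0 + alp / 2)) by (apply Hmon; lra).
  assert (Hd : Rabs (G (s0 + alp / 2) - G s0) < 1/2).
  { apply Hnear. split; [split; [exact I | lra]|]. simpl. unfold Rdist.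
    replace (s0 + alp / 2 - s0) with (alp / 2) by ring. rewrite Rabs_right; lra. }
  rewrite Rabs_right in Hd by lra.
  exists s0, (s0 + alp / 2). unfold in_supp. repeat split; lra.
Qed.

Lemma hazard_mono x y : in_supp G x -> in_supp G y -> x <= y -> Rhaz G x <= Rhaz G y.
Proof.
  destruct HG as [Hmon _]. intros [Hx1 Hx2] [Hy1 Hy2] Hxy. unfold Rhaz.
  destruct (Hmon x y Hxy) as [Hlt|Heq]; [|rewrite Heq; lra].
  assert (ln (1 - G y) < ln (1 - G x)) by (apply ln_increasing; lra). lra.
Qed.

(* -ln(1 - eta) <= 2 eta for small eta, via ln(1 + w) < w. *)
Lemma neg_ln_small eta : 0 < eta <= 1/2 -> 0 < - ln (1 - eta) <= 2 * eta.
Proof.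
  intros [H1 H2].
  assert (Hl : ln (1 - eta) < 0) by (rewrite <- ln_1; apply ln_increasing; lra).
  split; [lra|].
  set (w := eta / (1 - eta)).
  assert (Hw : 0 < w) by (unfold w; apply Rdiv_lt_0_compat; lra).
  assert (E : - ln (1 - eta) = ln (1 + w)) by (rewrite <- ln_Rinv by lra; f_equal; unfold w; field; lra).
  assert (ln (1 + w) < w).
  { rewrite <- (ln_exp w) at 2. apply ln_increasing; [lra | apply (exp_ineq1 w); lra]. }
  assert (w <= 2 * eta).
  { unfold w. apply Rmult_le_reg_r with (1 - eta); [lra|].
    unfold Rdiv. rewrite Rmult_assoc, Rinv_l by lra. nra. }
  lra.
Qed.

Lemma hazard_small_near_left eps y0 : 0 < eps -> in_supp G y0 ->
  exists z, in_supp G z /\ z < y0 /\ 0 < Rhaz G z < eps.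
Proof.
  intros He [Hy1 Hy2].
  set (eta := Rmin (G y0 / 2) (Rmin (1 / 2) (eps / 4))).
  assert (Heta : 0 < eta) by (unfold eta; repeat apply Rmin_pos; lra).
  assert (Heta1 : eta <= G y0 / 2) by apply Rmin_l.
  assert (Heta2 : eta <= 1 / 2) by (eapply Rle_trans; [apply Rmin_r | apply Rmin_l]).
  assert (Heta3 : eta <= eps / 4) by (eapply Rle_trans; [apply Rmin_r | apply Rmin_r]).
  destruct (cdf_attains eta y0 Heta ltac:(lra)) as [z [Hz Hzy]].
  assert (HR := neg_ln_small eta (conj Heta Heta2)).
  exists z. unfold in_supp, Rhaz. rewrite Hz. repeat split; lra.
Qed.

Lemma affine_hazard_iff_cdf (h : R -> R) (tau : R) :
  (forall eps, 0 < eps -> exists y0, in_supp G y0 /\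
     forall y, in_supp G y -> y < y0 -> Rabs (h y - tau) < eps) ->
  (exists c d, 0 < c /\ forall y, in_supp G y -> Rhaz G y = c * h y + d) <->
  (exists c, 0 < c /\ forall y, in_supp G y -> G y = 1 - exp (- (c * (h y - tau)))).
Proof.
  intros Htau. split.
  - intros [c [d [Hc Haff]]].
    assert (Hd : c * tau + d = 0).
    { apply small_zero. intros e He.
      destruct (Htau (e / (2 * c)) ltac:(apply Rdiv_lt_0_compat; lra)) as [y0 [Hy0 Hnear]].
      destruct (hazard_small_near_left (e / 2) y0 ltac:(lra) Hy0) as [z [Hz [Hzy HRz]]].
      assert (Hhz := Hnear z Hz Hzy).
      replace (c * tau + d) with (Rhaz G z - c * (h z - tau)) by (rewrite Haff by exact Hz; ring).
      eapply Rle_lt_trans; [apply Rabs_triang|].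
      rewrite Rabs_Ropp, Rabs_mult, (Rabs_right c), Rabs_right by lra.
      apply Rmult_lt_compat_l with (r := c) in Hhz; [|lra].
      replace (c * (e / (2 * c))) with (e / 2) in Hhz by (field; lra). lra. }
    exists c. split; [exact Hc|]. intros y Hy.
    assert (E := Haff y Hy). unfold Rhaz in E.
    replace (- (c * (h y - tau))) with (ln (1 - G y)) by lra.
    destruct Hy. rewrite exp_ln by lra. ring.
  - intros [c [Hc Hform]]. exists c, (- (c * tau)). split; [exact Hc|].
    intros y Hy. unfold Rhaz. rewrite (Hform y Hy).
    replace (1 - (1 - exp (- (c * (h y - tau))))) with (exp (- (c * (h y - tau)))) by ring.
    rewrite ln_exp. ring.
Qed.

End ContinuousCdf.

Lemma Rpower_root_pow m x : 0 < x ->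
  Rpower x (- (1 / (INR (S m) + 1))) ^ S (S m) = / x.
Proof.
  intros Hx. rewrite <- Rpower_pow by apply exp_pos.
  rewrite Rpower_mult, (S_INR (S m)).
  replace (- (1 / (INR (S m) + 1)) * (INR (S m) + 1)) with (Ropp 1)
    by (field; assert (HH := pos_INR (S m)); lra).
  rewrite Rpower_Ropp, Rpower_1 by exact Hx. reflexivity.
Qed.

Lemma record_value m gs gt :
  Rpower gt (INR (S m) / (INR (S m) + 1)) * Rpower gs (1 / (INR (S m) + 1))
  = / (Rpower gs (- (1 / (INR (S m) + 1))) * Rpower gt (- (1 / (INR (S m) + 1))) ^ S m).
Proof.
  assert (HK : 0 < INR (S m) + 1) by (assert (HH := pos_INR (S m)); lra).
  rewrite <- Rpower_pow by apply exp_pos. rewrite Rpower_mult.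
  rewrite Rinv_mult, Rmult_comm, <- Ropp_mult_distr_l, !Rpower_Ropp, !Rinv_inv.
  f_equal. f_equal. field. lra.
Qed.

(* Negative powers reverse order, so h is increasing because g is decreasing. *)
Lemma Rpower_neg_antitone p x y : 0 < p -> 0 < x -> x < y -> Rpower y (- p) < Rpower x (- p).
Proof.
  intros Hp Hx Hxy. unfold Rpower. apply exp_increasing.
  assert (Hl := ln_increasing x y Hx Hxy). nra.
Qed.

Lemma Rpower_comp_cont (f : R -> R) p y : 0 < f y -> continuity_pt f y ->
  continuity_pt (fun z => Rpower (f z) p) y.
Proof.
  intros Hpos Hc. unfold Rpower.
  apply (continuity_pt_comp (fun z => p * ln (f z)) exp).
  - apply (continuity_pt_scal (fun z => ln (f z)) p).
    apply (continuity_pt_comp f ln); [exact Hc|].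
    apply derivable_continuous_pt. exists (/ f y). apply derivable_pt_lim_ln, Hpos.
  - apply derivable_continuous_pt, derivable_pt_exp.
Qed.

Theorem corollary2 (G g : R -> R) (n k : nat) (tau : R) :
  (2 <= n)%nat -> (1 <= k)%nat -> (k <= n - 1)%nat ->
  is_cont_cdf G ->
  (forall y, in_supp G y -> 0 < g y) ->
  (forall y, in_supp G y -> continuity_pt g y) ->
  (forall y z, in_supp G y -> in_supp G z -> y < z -> g z < g y) ->
  (* lim_{y -> r_G^-} g(y) = 0 *)
  (forall eps, 0 < eps -> exists y0, in_supp G y0 /\
     forall y, in_supp G y -> y0 < y -> Rabs (g y) < eps) ->
  (* tau = lim_{y -> l_G^+} [g(y)]^(-1/(k+1)) *)
  (forall eps, 0 < eps -> exists y0, in_supp G y0 /\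
     forall y, in_supp G y -> y < y0 ->
       Rabs (Rpower (g y) (- (1 / (INR k + 1))) - tau) < eps) ->
  ((forall s t, in_supp G s -> in_supp G t -> s < t ->
      cond_exp_record_is G k g s t
        (Rpower (g t) (INR k / (INR k + 1)) * Rpower (g s) (1 / (INR k + 1))))
   <->
   (exists c, 0 < c /\ forall y, in_supp G y ->
      G y = 1 - exp (- (c * (Rpower (g y) (- (1 / (INR k + 1))) - tau))))).
Proof.
  intros _ Hk _ HG Hgpos Hgcont Hgdec _ Htau.
  destruct k as [|m]; [lia|].
  set (p := 1 / (INR (S m) + 1)) in *.
  assert (Hp : 0 < p) by (apply Rdiv_lt_0_compat; [lra | assert (HH := pos_INR (S m)); lra]).
  set (h := fun y => Rpower (g y) (- p)).
  apply iff_trans with (exists c d, 0 < c /\ forall y, in_supp G y -> Rhaz G y = c * h y + d);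
    [| exact (affine_hazard_iff_cdf G HG h tau Htau)].
  apply iff_trans with (forall s t, in_supp G s -> in_supp G t -> s < t -> record_identity g h (Rhaz G) m s t).
  - unfold cond_exp_record_is, cond_cdf, record_identity, h, p.
    split; intros H s t Hs Ht Hst; specialize (H s t Hs Ht Hst);
      rewrite record_value in *; exact H.
  - apply record_identity_iff_affine.
    + exact (supp_interval G HG).
    + intros y _. apply exp_pos.
    + intros y z Hy Hz Hyz. apply Rpower_neg_antitone; auto.
    + intros y Hy. apply Rpower_comp_cont; auto.
    + intros y Hy. unfold h, p. rewrite Rpower_root_pow, Rinv_inv by auto. reflexivity.
    + exact (hazard_mono G HG).
    + exact (supp_two_points G HG).
Qed.
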